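(* Let $X=(\mathbb C^\times)^3$ with coordinates $x=(x_{22},x_{11},x_{21})$. For $c\in\mathbb C^\times$ put $c_2=\dfrac{c\,x_{21}x_{22}+x_{11}^2}{x_{21}x_{22}+x_{11}^2}$ and define $$e_0^c(x)=\Big(\tfrac{c_2}{c}x_{22},\ \tfrac{x_{11}}{c},\ \tfrac{x_{21}}{c_2}\Big),\quad e_1^c(x)=(x_{22},\,c\,x_{11},\,x_{21}),\quad e_2^c(x)=\Big(c_2x_{22},\ x_{11},\ \tfrac{c}{c_2}x_{21}\Big),$$ $$\varepsilon_0(x)=x_{21}+\frac{x_{11}^2}{x_{22}},\quad \varepsilon_1(x)=\frac{x_{22}}{x_{11}},\quad \varepsilon_2(x)=\frac{x_{21}x_{22}+x_{11}^2}{x_{22}^2x_{21}},$$ $$\gamma_0(x)=\frac1{x_{11}^2},\quad \gamma_1(x)=\frac{x_{11}^2}{x_{21}x_{22}},\quad \gamma_2(x)=\frac{x_{21}^2x_{22}^2}{x_{11}^2}.$$ Then $(X,\{e_i\}_{i=0,1,2},\{\gamma_i\}_{i=0,1,2},\{\varepsilon_i\}_{i=0,1,2})$ is a positive geometric crystal for the affine Lie algebra $C_2^{(1)}$.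
   Context: The generalized Cartan matrix $(a_{ij})_{i,j\in\{0,1,2\}}$ of $C_2^{(1)}$ has $a_{ii}=2$, $a_{01}=-1$, $a_{10}=-2$, $a_{12}=-2$, $a_{21}=-1$, $a_{02}=a_{20}=0$. A geometric crystal for an affine Lie algebra with index set $I$ and Cartan matrix $(a_{ij})$ is a quadruple $(X,\{e_i\},\{\gamma_i\},\{\varepsilon_i\})$ where $X$ is an (ind-)variety, $e_i:\mathbb C^\times\times X\to X$, $(c,x)\mapsto e_i^c(x)$, are rational $\mathbb C^\times$-actions, and $\gamma_i,\varepsilon_i:X\to\mathbb C$ are rational functions such that: (1) $\{1\}\times X\cap\mathrm{dom}(e_i)$ is open dense in $\{1\}\times X$; (2) $\gamma_j(e_i^c(x))=c^{a_{ij}}\gamma_j(x)$; (3) $\varepsilon_i(e_i^c(x))=c^{-1}\varepsilon_i(x)$, and $\varepsilon_i(e_j^c(x))=\varepsilon_i(x)$ if $a_{ij}=a_{ji}=0$; (4) $e_i^{c_1}e_j^{c_2}=e_j^{c_2}e_i^{c_1}$ if $a_{ij}=a_{ji}=0$; $e_i^{c_1}e_j^{c_1c_2}e_i^{c_2}=e_j^{c_2}e_i^{c_1c_2}e_j^{c_1}$ if $a_{ij}=a_{ji}=-1$; $e_i^{c_1}e_j^{c_1^2c_2}e_i^{c_1c_2}e_j^{c_2}=e_j^{c_2}e_i^{c_1c_2}e_j^{c_1^2c_2}e_i^{c_1}$ if $a_{ij}=-2,a_{ji}=-1$; and the analogous length-six relation if $a_{ij}=-3,a_{ji}=-1$. It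 is positive if all the maps $e_i^c$ (coordinatewise), $\varepsilon_i$, $\gamma_i$ are given by ratios of polynomials (in the coordinates and $c$) with positive coefficients. *)

From HB Require Import structures.
From mathcomp Require Import all_boot all_order all_algebra.
From mathcomp Require Import reals.
From mathcomp Require Import complex.
Set Implicit Arguments. Unset Strict Implicit. Unset Printing Implicit Defensive.
Import Order.TTheory GRing.Theory Num.Theory.
Local Open Scope ring_scope.
Local Open Scope complex_scope.

Section GeomCrystal.
Variable R : realType.
Local Notation C := (R[i]).

Inductive pexpr (m : nat) : Type :=
| PConst of C
| PVar of 'I_m
| PAdd of pexpr m & pexpr m
| PMul of pexpr m & pexpr m.

Fixpoint peval (m : nat) (x : 'I_m -> C) (p : pexpr m) : C :=
  match p with
  | PConst a => a
  | PVar k => x k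
  | PAdd p q => peval x p + peval x q
  | PMul p q => peval x p * peval x q
  end.

(* polynomial expressions all of whose constants are positive reals: these
   are exactly the polynomials with positive coefficients (up to the choice
   of representation) *)
Fixpoint pos_pexpr (m : nat) (p : pexpr m) : Prop :=
  match p with
  | PConst a => 0 < a
  | PVar _ => True
  | PAdd p q => pos_pexpr p /\ pos_pexpr q
  | PMul p q => pos_pexpr p /\ pos_pexpr q
  end.

Definition rational_on (m : nat) (D : ('I_m -> C) -> Prop)
  (f : ('I_m -> C) -> C) : Prop :=
  exists P Q : pexpr m, forall x, D x ->
    peval x Q != 0 /\ f x = peval x P / peval x Q.

Definition pos_rational_on (m : nat) (D : ('I_m -> C) -> Prop)
  (f : ('I_m -> C) -> C) : Prop :=
  exists P Q : pexpr m, [/\ pos_pexpr P, pos_pexpr Q & forall x, D x ->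
    peval x Q != 0 /\ f x = peval x P / peval x Q].

Definition zopen (m : nat) (X V : ('I_m -> C) -> Prop) : Prop :=
  (forall x, V x -> X x) /\
  exists ps : seq (pexpr m), forall x,
    V x <-> (X x /\ has (fun q => peval x q != 0) ps).

Definition zdense (m : nat) (X U : ('I_m -> C) -> Prop) : Prop :=
  forall V, zopen X V -> (exists x, V x) -> exists x, V x /\ U x.

(* points of C^(1+m) seen as (c, x) *)
Definition tl (m : nat) (y : 'I_m.+1 -> C) : 'I_m -> C :=
  fun k => y (lift ord0 k).

Section Data.
Variables (n m : nat).
Variable (e : 'I_n -> C -> ('I_m -> C) -> ('I_m -> C)).
Variable (dom : 'I_n -> C -> ('I_m -> C) -> Prop).

(* composite e_{i_1}^{c_1} ... e_{i_k}^{c_k} (rightmost applied first) *)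
Fixpoint ecomp (l : seq ('I_n * C)) (x : 'I_m -> C) : 'I_m -> C :=
  match l with
  | [::] => x
  | (i, c) :: l' => e i c (ecomp l' x)
  end.

Fixpoint ecomp_def (l : seq ('I_n * C)) (x : 'I_m -> C) : Prop :=
  match l with
  | [::] => True
  | (i, c) :: l' => ecomp_def l' x /\ dom i c (ecomp l' x)
  end.

(* equality of two composites as rational maps *)
Definition erel (l1 l2 : seq ('I_n * C)) : Prop :=
  forall x, ecomp_def l1 x -> ecomp_def l2 x ->
    forall k, ecomp l1 x k = ecomp l2 x k.
End Data.

(* Geometric crystal on X subset C^m for a Cartan matrix A indexed by 'I_n;
   e i c x is defined (as a rational map into X) on dom i c x. *)
Definition geom_crystal (n m : nat) (A : 'I_n -> 'I_n -> int)
  (X : ('I_m -> C) -> Prop)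
  (e : 'I_n -> C -> ('I_m -> C) -> ('I_m -> C))
  (dom : 'I_n -> C -> ('I_m -> C) -> Prop)
  (gam eps : 'I_n -> ('I_m -> C) -> C) : Prop :=
  (
   (forall i c x, dom i c x -> [/\ c != 0, X x & X (e i c x)]) /\
   (forall i, zopen (fun y : 'I_m.+1 -> C => y ord0 != 0 /\ X (tl y))
                    (fun y => dom i (y ord0) (tl y))) /\
   (forall i k, rational_on (fun y : 'I_m.+1 -> C => dom i (y ord0) (tl y))
                            (fun y => e i (y ord0) (tl y) k)) /\
   (forall i, rational_on X (gam i) /\ rational_on X (eps i)) /\
   (forall i x, dom i 1 x -> forall k, e i 1 x k = x k) /\
   (forall i c1 c2, erel e dom [:: (i, c1); (i, c2)] [:: (i, c1 * c2)]) /\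
   (forall i, zopen X (dom i 1) /\ zdense X (dom i 1)) /\
   (forall i j c x, dom i c x -> gam j (e i c x) = c ^ (A i j) * gam j x) /\
   (forall i c x, dom i c x -> eps i (e i c x) = c^-1 * eps i x) /\
   (forall i j c x, A i j = 0 -> A j i = 0 -> dom j c x ->
                    eps i (e j c x) = eps i x) /\
   forall i j c1 c2,
     [/\ (A i j = 0 -> A j i = 0 ->
            erel e dom [:: (i, c1); (j, c2)] [:: (j, c2); (i, c1)]),
         (A i j = -1 -> A j i = -1 ->
            erel e dom [:: (i, c1); (j, c1 * c2); (i, c2)]
                       [:: (j, c2); (i, c1 * c2); (j, c1)]),
         (A i j = -2 -> A j i = -1 ->
            erel e dom [:: (i, c1); (j, c1 ^+ 2 * c2); (i, c1 * c2); (j, c2)]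
                       [:: (j, c2); (i, c1 * c2); (j, c1 ^+ 2 * c2); (i, c1)]) &
         (A i j = -3 -> A j i = -1 ->
            erel e dom [:: (i, c1); (j, c1 ^+ 3 * c2); (i, c1 ^+ 2 * c2);
                           (j, c1 ^+ 3 * c2 ^+ 2); (i, c1 * c2); (j, c2)]
                       [:: (j, c2); (i, c1 * c2); (j, c1 ^+ 3 * c2 ^+ 2);
                           (i, c1 ^+ 2 * c2); (j, c1 ^+ 3 * c2); (i, c1)])]).

Definition pos_geom_crystal (n m : nat) (A : 'I_n -> 'I_n -> int)
  (X : ('I_m -> C) -> Prop)
  (e : 'I_n -> C -> ('I_m -> C) -> ('I_m -> C))
  (dom : 'I_n -> C -> ('I_m -> C) -> Prop)
  (gam eps : 'I_n -> ('I_m -> C) -> C) : Prop :=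
  [/\ geom_crystal A X e dom gam eps,
      (forall i k, pos_rational_on
                     (fun y : 'I_m.+1 -> C => dom i (y ord0) (tl y))
                     (fun y => e i (y ord0) (tl y) k)),
      (forall i, pos_rational_on X (gam i)) &
      (forall i, pos_rational_on X (eps i))].

Definition cartanC2 (i j : 'I_3) : int :=
  match nat_of_ord i, nat_of_ord j with
  | 0, 0 => 2 | 1, 1 => 2 | 2, 2 => 2
  | 0, 1 => -1 | 1, 0 => -2 | 1, 2 => -2 | 2, 1 => -1
  | _, _ => 0
  end.

(* points x = (x22, x11, x21) : coordinate 0 is x22, 1 is x11, 2 is x21 *)
Definition torus3 (x : 'I_3 -> C) : Prop := forall k, x k != 0.

Definition mk3 (a b d : C) : 'I_3 -> C :=
  fun k => match nat_of_ord k with 0 => a | 1 => b | _ => d end.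

Definition x22 (x : 'I_3 -> C) := x (@Ordinal 3 0 isT).
Definition x11 (x : 'I_3 -> C) := x (@Ordinal 3 1 isT).
Definition x21 (x : 'I_3 -> C) := x (@Ordinal 3 2 isT).

Definition cc2 (c : C) (x : 'I_3 -> C) : C :=
  (c * x21 x * x22 x + x11 x ^+ 2) / (x21 x * x22 x + x11 x ^+ 2).

Definition eC2 (i : 'I_3) (c : C) (x : 'I_3 -> C) : 'I_3 -> C :=
  match nat_of_ord i with
  | 0 => mk3 (cc2 c x / c * x22 x) (x11 x / c) (x21 x / cc2 c x)
  | 1 => mk3 (x22 x) (c * x11 x) (x21 x)
  | _ => mk3 (cc2 c x * x22 x) (x11 x) (c / cc2 c x * x21 x)
  end.

(* domain of definition of e_i^c as a map into X = (C^x)^3 via the formulas *)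
Definition domC2 (i : 'I_3) (c : C) (x : 'I_3 -> C) : Prop :=
  [/\ c != 0, torus3 x &
      (nat_of_ord i = 1%N \/
       (x21 x * x22 x + x11 x ^+ 2 != 0 /\ c * x21 x * x22 x + x11 x ^+ 2 != 0))].

Definition epsC2 (i : 'I_3) (x : 'I_3 -> C) : C :=
  match nat_of_ord i with
  | 0 => x21 x + x11 x ^+ 2 / x22 x
  | 1 => x22 x / x11 x
  | _ => (x21 x * x22 x + x11 x ^+ 2) / (x22 x ^+ 2 * x21 x)
  end.

Definition gamC2 (i : 'I_3) (x : 'I_3 -> C) : C :=
  match nat_of_ord i with
  | 0 => 1 / x11 x ^+ 2
  | 1 => x11 x ^+ 2 / (x21 x * x22 x)
  | _ => x21 x ^+ 2 * x22 x ^+ 2 / x11 x ^+ 2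
  end.

End GeomCrystal.

From mathcomp Require Import all_boot all_order all_algebra.
From mathcomp Require Import reals complex.
From mathcomp Require Import ring.
Set Implicit Arguments. Unset Strict Implicit. Unset Printing Implicit Defensive.
Import Order.TTheory GRing.Theory Num.Theory.
Local Open Scope ring_scope.

(* In the coordinates b = x11 and s = x21 x22 all three actions are monomial:
   e_0^c (b, s) = (b/c, s/c), e_1^c (b, s) = (c b, s), e_2^c (b, s) = (b, c s),
   while x22 is rescaled by c2/c, 1 and c2, where c2 = (c s + b^2) / (s + b^2).
   The gamma_i only depend on (b, s), so they transform through the Cartan
   matrix, and the action and braid relations become rational identities between
   products of such factors, valid wherever the intermediate values of s + b^2
   and c s + b^2 are nonzero.  Finally the
   domain of e_i^1 is dense in the torus: along the line x11 |-> l x11 through a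
   point, a polynomial that does not vanish at l = 1, the polynomial s + l^2 b^2
   and l itself have a common non-root among the natural numbers. *)

Lemma poly_nat_nonroot (F : numDomainType) (p : {poly F}) :
  p != 0 -> exists n : nat, ~~ root p n%:R.
Proof.
move=> p0; case: (boolP (all (fun n => root p n%:R) (iota 0 (size p)))); last first.
  by case/allPn=> n _ pn; exists n.
move=> all_root; have nat_uniq : uniq [seq (n%:R : F) | n <- iota 0 (size p)].
  by rewrite map_inj_uniq ?iota_uniq // => m n /eqP; rewrite eqr_nat => /eqP.
have := max_poly_roots p0 _ nat_uniq; rewrite size_map size_iota ltnn all_map.
by move/(_ all_root).
Qed.

Lemma neq0_eq_div (F : unitRingType) (p q k : F) : p = q / k -> p != 0 -> q != 0.
Proof. by move=> ->; apply: contraNneq => ->; rewrite mul0r. Qed.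

Section GeomCrystal.
Variable R : realType.
Local Notation C := (R[i]).

Lemma peval_eq m (x y : 'I_m -> C) (q : pexpr R m) : x =1 y -> peval x q = peval y q.
Proof. by move=> xy; elim: q => //= [p -> q ->|p -> q ->]. Qed.

Lemma pos_rational_onW m (D : ('I_m -> C) -> Prop) f :
  pos_rational_on D f -> rational_on D f.
Proof. by case=> P [Q [_ _ PQ]]; exists P, Q. Qed.

Lemma erel_sym n m e dom (l1 l2 : seq ('I_n * C)) :
  @erel R n m e dom l1 l2 -> erel e dom l2 l1.
Proof. by move=> l12 x d2 d1 k; rewrite l12. Qed.

End GeomCrystal.

Section C2.
Variable R : realType.
Local Notation C := (R[i]).
Local Notation pt := ('I_3 -> C).
Local Notation i0 := (@Ordinal 3 0 isT).
Local Notation i1 := (@Ordinal 3 1 isT).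
Local Notation i2 := (@Ordinal 3 2 isT).
Local Notation e := (@eC2 R).
Local Notation dom := (@domC2 R).

(* Closes goals [p != 0] from products of hypotheses [q != 0], up to ring
   equality between [p] and [q]. *)
Ltac neq0 := repeat first
  [ done | exact: oner_neq0 | apply/andP; split
  | apply: mulf_neq0 | apply: expf_neq0 | apply: invr_neq0
  | match goal with H : is_true (?q != 0) |- is_true (?p != 0) =>
      rewrite (_ : p = q); [exact: H | ring] end ].

Lemma ord3P (i : 'I_3) : [\/ i = i0, i = i1 | i = i2].
Proof.
by case: i => -[|[|[|//]]] ?; [apply: Or31 | apply: Or32 | apply: Or33]; apply: val_inj.
Qed.

Lemma torus3E (x : pt) : torus3 x <-> [/\ x22 x != 0, x11 x != 0 & x21 x != 0].
Proof.
split=> [tx|[? ? ?] k]; first by split; apply: tx.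
by case: (ord3P k) => ->.
Qed.

Definition x2122 (x : pt) := x21 x * x22 x.

Lemma eq_pt3 (x y : pt) : x22 x = x22 y -> x11 x = x11 y -> x21 x = x21 y -> x =1 y.
Proof. by move=> ? ? ? k; case: (ord3P k) => ->. Qed.

Lemma eq_pt (x y : pt) : torus3 x ->
  x22 x = x22 y -> x11 x = x11 y -> x2122 x = x2122 y -> x =1 y.
Proof.
case/torus3E=> aN _ _ a_eq b_eq; rewrite /x2122 -a_eq => /(mulIf aN).
exact: eq_pt3.
Qed.

Definition dom02 c x :=
  [/\ c != 0, torus3 x, x2122 x + x11 x ^+ 2 != 0 & c * x2122 x + x11 x ^+ 2 != 0].

Lemma domC2_not1 i c x : i != i1 -> dom i c x <-> dom02 c x.
Proof.
move=> iN1; have i1N : nat_of_ord i <> 1%N by move=> i1E; case/eqP: iN1; apply: val_inj.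
rewrite /domC2 /dom02 /x2122 mulrA.
by split=> [[? ? [//|[]]]|[? ? ? ?]]; [split | split=> //; right].
Qed.

Lemma domC2_0 c x : dom i0 c x <-> dom02 c x. Proof. exact: domC2_not1. Qed.
Lemma domC2_1 c x : dom i1 c x <-> c != 0 /\ torus3 x.
Proof. by split=> [[]|[]]; [|split=> //; left]. Qed.
Lemma domC2_2 c x : dom i2 c x <-> dom02 c x. Proof. exact: domC2_not1. Qed.

Lemma domC2_neq0_torus i c x : dom i c x -> c != 0 /\ torus3 x.
Proof. by case. Qed.

Lemma cc2E c x : cc2 c x = (c * x2122 x + x11 x ^+ 2) / (x2122 x + x11 x ^+ 2).
Proof. by rewrite /cc2 /x2122 mulrA. Qed.

Lemma cc2_neq0 c x : dom02 c x -> cc2 c x != 0.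
Proof. by case=> _ _ uN vN; rewrite cc2E; neq0. Qed.

Lemma x22_e0 c x : x22 (e i0 c x) = cc2 c x / c * x22 x. Proof. by []. Qed.
Lemma x11_e0 c x : x11 (e i0 c x) = x11 x / c. Proof. by []. Qed.
Lemma x21_e0 c x : x21 (e i0 c x) = x21 x / cc2 c x. Proof. by []. Qed.
Lemma x22_e1 c x : x22 (e i1 c x) = x22 x. Proof. by []. Qed.
Lemma x11_e1 c x : x11 (e i1 c x) = c * x11 x. Proof. by []. Qed.
Lemma x21_e1 c x : x21 (e i1 c x) = x21 x. Proof. by []. Qed.
Lemma x22_e2 c x : x22 (e i2 c x) = cc2 c x * x22 x. Proof. by []. Qed.
Lemma x11_e2 c x : x11 (e i2 c x) = x11 x. Proof. by []. Qed.
Lemma x21_e2 c x : x21 (e i2 c x) = c / cc2 c x * x21 x. Proof. by []. Qed.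

Lemma x2122_e0 c x : dom i0 c x -> x2122 (e i0 c x) = x2122 x / c.
Proof.
move=> /domC2_0 dx; have [cN _ _ _] := dx; have := cc2_neq0 dx.
by rewrite /x2122 x22_e0 x21_e0 => ?; field; neq0.
Qed.

Lemma x2122_e1 c x : x2122 (e i1 c x) = x2122 x. Proof. by []. Qed.

Lemma x2122_e2 c x : dom i2 c x -> x2122 (e i2 c x) = c * x2122 x.
Proof.
move=> /domC2_2 dx; have := cc2_neq0 dx.
by rewrite /x2122 x22_e2 x21_e2 => ?; field; neq0.
Qed.

Definition coordE := (x22_e0, x22_e1, x22_e2, x11_e0, x11_e1, x11_e2,
  x21_e0, x21_e1, x21_e2, x2122_e0, x2122_e1, x2122_e2, cc2E).

Lemma torus3_eC2 i c x : dom i c x -> torus3 (e i c x).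
Proof.
case: (ord3P i) => ->.
- move=> /domC2_0 dx; have [cN /torus3E[aN bN dN] _ _] := dx; have := cc2_neq0 dx.
  by move=> ?; apply/torus3E; rewrite x22_e0 x11_e0 x21_e0; split; neq0.
- by case/domC2_1=> cN /torus3E[aN bN dN]; apply/torus3E; split; neq0.
- move=> /domC2_2 dx; have [cN /torus3E[aN bN dN] _ _] := dx; have := cc2_neq0 dx.
  by move=> ?; apply/torus3E; rewrite x22_e2 x11_e2 x21_e2; split; neq0.
Qed.

Lemma eC2_1 i x : dom i 1 x -> e i 1 x =1 x.
Proof.
case: (ord3P i) => -> dx.
- have /domC2_0[_ _ u0 _] := dx.
  by apply: eq_pt (torus3_eC2 dx) _ _ _; rewrite ?coordE //; field; neq0.
- by apply: eq_pt3; rewrite ?coordE ?mul1r.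
- have /domC2_2[_ _ u0 _] := dx.
  by apply: eq_pt (torus3_eC2 dx) _ _ _; rewrite ?coordE //; field; neq0.
Qed.

Lemma eC2_act0 c1 c2 : erel e dom [:: (i0, c1); (i0, c2)] [:: (i0, c1 * c2)].
Proof.
move=> x [[_ h1] h2] [_ g1]; cbn [ecomp] in *.
have /domC2_0[c2N _ u0 v0] := h1; have /domC2_0[c1N _ _ _] := h2.
by apply: eq_pt (torus3_eC2 h2) _ _ _; rewrite ?coordE //; field; neq0.
Qed.

Lemma eC2_act1 c1 c2 : erel e dom [:: (i1, c1); (i1, c2)] [:: (i1, c1 * c2)].
Proof. by move=> x _ _; apply: eq_pt3; rewrite ?coordE // mulrA. Qed.

Lemma eC2_act2 c1 c2 : erel e dom [:: (i2, c1); (i2, c2)] [:: (i2, c1 * c2)].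
Proof.
move=> x [[_ h1] h2] [_ g1]; cbn [ecomp] in *.
have /domC2_2[_ _ u0 _] := h1; have /domC2_2[_ _ u1 _] := h2.
rewrite ?coordE // in u1.
by apply: eq_pt (torus3_eC2 h2) _ _ _; rewrite ?coordE //; field; neq0.
Qed.

Lemma eC2_comm02 c1 c2 : erel e dom [:: (i0, c1); (i2, c2)] [:: (i2, c2); (i0, c1)].
Proof.
move=> x [[_ h1] h2] [[_ g1] g2]; cbn [ecomp] in *.
have /domC2_2[_ _ u0 _] := h1; have /domC2_0[c1N _ _ v1] := g1.
have /domC2_0[_ _ u1 _] := h2; rewrite ?coordE // in u1.
by apply: eq_pt (torus3_eC2 h2) _ _ _; rewrite ?coordE //; field; neq0.
Qed.

Lemma eC2_braid10 c1 c2 : erel e dom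
  [:: (i1, c1); (i0, c1 ^+ 2 * c2); (i1, c1 * c2); (i0, c2)]
  [:: (i0, c2); (i1, c1 * c2); (i0, c1 ^+ 2 * c2); (i1, c1)].
Proof.
move=> x [[[[_ h1] _] h3] h4] [[[[_ g1] g2] _] g4]; cbn [ecomp] in *.
have /domC2_0[c2N _ u0 _] := h1; have /domC2_1[c1N _] := g1.
have /domC2_0[_ _ u1 _] := g2; rewrite ?coordE // in u1.
have u2 : x2122 x + c1 ^+ 2 * c2 * x11 x ^+ 2 != 0.
  have /domC2_0[_ _ + _] := h3; rewrite ?coordE //.
  by apply: (neq0_eq_div (k := c2)); field; neq0.
by apply: eq_pt (torus3_eC2 h4) _ _ _; rewrite ?coordE //; field; neq0.
Qed.

Lemma eC2_braid12 c1 c2 : erel e dom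
  [:: (i1, c1); (i2, c1 ^+ 2 * c2); (i1, c1 * c2); (i2, c2)]
  [:: (i2, c2); (i1, c1 * c2); (i2, c1 ^+ 2 * c2); (i1, c1)].
Proof.
move=> x [[[[_ h1] _] h3] h4] [[[_ g2] _] g4]; cbn [ecomp] in *.
have /domC2_2[_ _ u0 _] := h1; have /domC2_2[_ _ u1 _] := g2; have /domC2_2[_ _ u2 _] := h3.
have /domC2_2[_ _ u3 _] := g4; rewrite ?coordE // in u1 u2 u3.
by apply: eq_pt (torus3_eC2 h4) _ _ _; rewrite ?coordE //; field; neq0.
Qed.

Lemma gamC2E x :
  (gamC2 i0 x = 1 / x11 x ^+ 2) * (gamC2 i1 x = x11 x ^+ 2 / x2122 x) *
  (gamC2 i2 x = x2122 x ^+ 2 / x11 x ^+ 2).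
Proof. by rewrite /gamC2 /x2122 /= exprMn. Qed.

Lemma gamC2_eC2 i j c x : dom i c x ->
  gamC2 j (e i c x) = c ^ cartanC2 i j * gamC2 j x.
Proof.
move=> dx; have [cN /torus3E[aN bN dN]] := domC2_neq0_torus dx.
case: (ord3P i) dx => -> dx; case: (ord3P j) => ->; rewrite ?gamC2E /cartanC2 /=.
all: by rewrite ?expr0z ?exprN1 -?invr_expz -?exprnP ?coordE //; field; neq0.
Qed.

Lemma epsC2E x : torus3 x ->
  (epsC2 i0 x = (x2122 x + x11 x ^+ 2) / x22 x) * (epsC2 i1 x = x22 x / x11 x) *
  (epsC2 i2 x = (x2122 x + x11 x ^+ 2) / (x22 x * x2122 x)).
Proof.
by case/torus3E=> aN _ dN; rewrite /epsC2 /x2122 /=; split; [split=> // |]; field; neq0.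
Qed.

Lemma epsC2_eC2 i c x : dom i c x -> epsC2 i (e i c x) = c^-1 * epsC2 i x.
Proof.
move=> dx; have [cN tx] := domC2_neq0_torus dx; have tex := torus3_eC2 dx.
have /torus3E[aN bN dN] := tx.
case: (ord3P i) dx tex => -> dx tex;
  [have /domC2_0[_ _ u v] := dx | | have /domC2_2[_ _ u v] := dx].
all: by rewrite (epsC2E tx) (epsC2E tex) ?coordE //; field; neq0.
Qed.

Lemma epsC2_eC2_orth i j c x : cartanC2 i j = 0 -> cartanC2 j i = 0 -> dom j c x ->
  epsC2 i (e j c x) = epsC2 i x.
Proof.
move=> + + dx; have [cN tx] := domC2_neq0_torus dx; have tex := torus3_eC2 dx.
have /torus3E[aN _ dN] := tx.
case: (ord3P i) => ->; case: (ord3P j) dx tex => -> dx tex //= _ _;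
  [have /domC2_2[_ _ u v] := dx | have /domC2_0[_ _ u v] := dx].
all: by rewrite (epsC2E tx) (epsC2E tex) ?coordE //; field; neq0.
Qed.

Definition pden m (a b d : pexpr R m) := PAdd (PMul d a) (PMul b b).
Definition pnum m (c a b d : pexpr R m) := PAdd (PMul (PMul c d) a) (PMul b b).
Definition p1 m : pexpr R m := @PConst R m 1.
Arguments p1 : clear implicits.

Definition vc : pexpr R 4 := @PVar R _ ord0.
Definition va : pexpr R 4 := @PVar R _ (lift ord0 i0).
Definition vb : pexpr R 4 := @PVar R _ (lift ord0 i1).
Definition vd : pexpr R 4 := @PVar R _ (lift ord0 i2).

Definition wa : pexpr R 3 := @PVar R _ i0.
Definition wb : pexpr R 3 := @PVar R _ i1.
Definition wd : pexpr R 3 := @PVar R _ i2.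

Lemma peval4E (y : 'I_4 -> C) :
  (peval y vc = y ord0) * (peval y va = x22 (tl y)) * (peval y vb = x11 (tl y)) *
  (peval y vd = x21 (tl y)).
Proof. by []. Qed.

Lemma peval3E (x : pt) :
  (peval x wa = x22 x) * (peval x wb = x11 x) * (peval x wd = x21 x).
Proof. by []. Qed.

Lemma pos_rational_on_pt m (D : ('I_m -> C) -> Prop) (f : ('I_m -> C) -> pt) :
  pos_rational_on D (fun y => x22 (f y)) -> pos_rational_on D (fun y => x11 (f y)) ->
  pos_rational_on D (fun y => x21 (f y)) -> forall k, pos_rational_on D (fun y => f y k).
Proof. by move=> ? ? ? k; case: (ord3P k) => ->. Qed.

Ltac dom_facts d :=
  first [have [cN /torus3E[aN bN dN]] := domC2_neq0_torus d | have /torus3E[aN bN dN] := d];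
  try (have := d; rewrite domC2_0 /dom02 /x2122 => -[_ _ u v]);
  try (have := d; rewrite domC2_2 /dom02 /x2122 => -[_ _ u v]).

Ltac pos_rational P Q :=
  exists P, Q; split; [by rewrite /=; do ?split; exact: ltr01 ..|];
  let d := fresh "d" in intros ? d;
  cbn [peval pden pnum p1]; rewrite ?peval4E ?peval3E; dom_facts d;
  try rewrite (epsC2E d); rewrite ?gamC2E ?coordE /x2122;
  split; [by neq0 | by field; neq0].

Lemma pos_rational_eC2 i k : pos_rational_on
  (fun y : 'I_4 -> C => dom i (y ord0) (tl y)) (fun y => e i (y ord0) (tl y) k).
Proof.
move: k; case: (ord3P i) => ->.
all: apply: (pos_rational_on_pt (f := fun y => e _ (y ord0) (tl y))).
- pos_rational (PMul (pnum vc va vb vd) va) (PMul vc (pden va vb vd)).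
- pos_rational vb vc.
- pos_rational (PMul vd (pden va vb vd)) (pnum vc va vb vd).
- pos_rational va (p1 4).
- pos_rational (PMul vc vb) (p1 4).
- pos_rational vd (p1 4).
- pos_rational (PMul (pnum vc va vb vd) va) (pden va vb vd).
- pos_rational vb (p1 4).
- pos_rational (PMul (PMul vc vd) (pden va vb vd)) (pnum vc va vb vd).
Qed.

Lemma pos_rational_gamC2 j : pos_rational_on (@torus3 R) (gamC2 j).
Proof.
case: (ord3P j) => ->.
- pos_rational (p1 3) (PMul wb wb).
- pos_rational (PMul wb wb) (PMul wd wa).
- pos_rational (PMul (PMul wd wa) (PMul wd wa)) (PMul wb wb).
Qed.

Lemma pos_rational_epsC2 j : pos_rational_on (@torus3 R) (epsC2 j).
Proof.
case: (ord3P j) => ->.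
- pos_rational (pden wa wb wd) wa.
- pos_rational wa wb.
- pos_rational (pden wa wb wd) (PMul wa (PMul wd wa)).
Qed.

Lemma zopen_domC2 i : zopen (fun y : 'I_4 -> C => y ord0 != 0 /\ torus3 (tl y))
                            (fun y => dom i (y ord0) (tl y)).
Proof.
split; first by move=> y /domC2_neq0_torus.
case: (ord3P i) => ->; [ exists [:: PMul (pden va vb vd) (pnum vc va vb vd)]
                       | exists [:: p1 4]
                       | exists [:: PMul (pden va vb vd) (pnum vc va vb vd)] ];
  move=> y; rewrite /= orbF ?domC2_0 ?domC2_1 ?domC2_2 /dom02 /x2122.
all: rewrite ?oner_neq0 ?mulf_eq0 ?negb_or -?expr2 ?mulrA.
- by split=> [[? ? ? ?]|[[? ?] /andP[? ?]]]; [split; [|apply/andP] | ].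
- by split=> [|[]].
- by split=> [[? ? ? ?]|[[? ?] /andP[? ?]]]; [split; [|apply/andP] | ].
Qed.

Lemma zopen_domC2_1 i : zopen (@torus3 R) (dom i 1).
Proof.
split; first by move=> x /domC2_neq0_torus[].
case: (ord3P i) => ->;
  [exists [:: pden wa wb wd] | exists [:: p1 3] | exists [:: pden wa wb wd]];
  move=> x; rewrite /= orbF ?domC2_0 ?domC2_1 ?domC2_2.
all: by rewrite /dom02 ?mul1r -?expr2 oner_neq0; split=> [[]|[]]; split.
Qed.

Definition scale11 (x : pt) l := mk3 (x22 x) (l * x11 x) (x21 x).

Fixpoint poly11 (x : pt) (q : pexpr R 3) : {poly C} :=
  match q with
  | PConst a => a%:P
  | PVar k => if nat_of_ord k == 1%N then 'X * (x11 x)%:P else (x k)%:P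
  | PAdd p q => poly11 x p + poly11 x q
  | PMul p q => poly11 x p * poly11 x q
  end.

Lemma horner_poly11 x q l : (poly11 x q).[l] = peval (scale11 x l) q.
Proof.
elim: q => [a|k|p IHp q IHq|p IHp q IHq] /=; rewrite ?hornerE ?IHp ?IHq //.
by case: (ord3P k) => ->; rewrite /= ?hornerE.
Qed.

Lemma poly11_den_neq0 x : x11 x != 0 -> poly11 x (pden wa wb wd) != 0.
Proof.
move=> bN; apply: contraNneq (expf_neq0 2 bN) => u0.
have <- : (poly11 x (pden wa wb wd))`_2 = x11 x ^+ 2.
  by rewrite /= coefD -polyCM coefC mulrACA -polyCM coefMC -expr2 coefXn /= add0r mul1r.
by rewrite u0 coef0.
Qed.

Lemma torus3_generic_point (q : pexpr R 3) x0 : torus3 x0 -> peval x0 q != 0 ->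
  exists x, [/\ torus3 x, peval x q != 0 & x2122 x + x11 x ^+ 2 != 0].
Proof.
case/torus3E=> aN bN dN qN; pose p := poly11 x0 q * poly11 x0 (pden wa wb wd) * 'X.
have qpN : poly11 x0 q != 0.
  apply: contraNneq qN => q0; rewrite -(@peval_eq _ _ (scale11 x0 1)).
    by rewrite -horner_poly11 q0 horner0.
  by apply: eq_pt3 => //; exact: mul1r.
have [|n] := @poly_nat_nonroot _ p; first by rewrite !mulf_neq0 ?polyX_eq0 ?poly11_den_neq0.
rewrite /root !hornerMX mulf_eq0 hornerM mulf_eq0 !negb_or => /andP[/andP[qnN unN] nN].
rewrite !horner_poly11 in qnN unN.
exists (scale11 x0 n%:R); split=> //; apply/torus3E; split=> //; exact: mulf_neq0.
Qed.

Lemma zdense_domC2_1 i : zdense (@torus3 R) (dom i 1).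
Proof.
move=> V [VX [ps Vps]] [x0 Vx0]; have [tx0] := (Vps x0).1 Vx0.
case/(has_nthP (p1 3))=> j jlt /(torus3_generic_point tx0)[x [tx qN uN]].
exists x; split; first by apply/Vps; split=> //; apply/(has_nthP (p1 3)); exists j.
case: (ord3P i) => ->; rewrite ?domC2_0 ?domC2_1 ?domC2_2.
all: by rewrite /dom02 ?mul1r; split=> //; exact: oner_neq0.
Qed.

End C2.

Theorem mainTheorem3 (R : realType) :
  pos_geom_crystal (@cartanC2) (@torus3 R) (@eC2 R) (@domC2 R)
                   (@gamC2 R) (@epsC2 R).
Proof.
split; [| exact: pos_rational_eC2 | exact: pos_rational_gamC2 | exact: pos_rational_epsC2].
split; first by move=> i c x dx; have [? ?] := domC2_neq0_torus dx; split=> //;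
  exact: torus3_eC2.
split; first exact: zopen_domC2.
split; first by move=> i k; exact/pos_rational_onW/pos_rational_eC2.
split; first by move=> i; split; apply/pos_rational_onW;
  [exact: pos_rational_gamC2 | exact: pos_rational_epsC2].
split; first exact: eC2_1.
split; first by move=> i c1 c2; case: (ord3P i) => ->;
  [exact: eC2_act0 | exact: eC2_act1 | exact: eC2_act2].
split; first by move=> i; split; [exact: zopen_domC2_1 | exact: zdense_domC2_1].
split; first exact: gamC2_eC2.
split; first exact: epsC2_eC2.
split; first exact: epsC2_eC2_orth.
move=> i j c1 c2; case: (ord3P i) => ->; case: (ord3P j) => ->; split=> // _ _.
- exact: eC2_comm02.
- exact: eC2_braid10.
- exact: eC2_braid12.
- exact/erel_sym/eC2_comm02.
Qed.
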